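(* Let $H=(X\cup Y,E_H)$ be a $3$-regular bipartite graph with $|X|=|Y|=n$, let $\mathrm{order}:Y\to\{1,\dots,n\}$ be a bijection, and let $G$ be the instance of the rank-maximal matchings problem constructed as follows. Applicants: $a_x$ for $x\in X$, and dummy applicants $ad_1,\dots,ad_{n-3}$. Posts: $p_y$ for $y\in Y$, and dummy posts $pd_1,\dots,pd_{n-3}$. Applicant $ad_i$ has the single post $pd_i$ at rank $1$. For $x\in X$ with neighbours $y_1,y_2,y_3$ in $H$, applicant $a_x$ ranks $p_{y_j}$ at rank $\mathrm{order}(y_j)$ ($j=1,2,3$), and the remaining $n-3$ ranks in $\{1,\dots,n\}$ of $a_x$'s list are filled by the $n-3$ dummy posts, one per rank. Then there is a one-to-one correspondence between perfect matchings of $H$ and rank-maximal matchings of $G$: the map $M\mapsto\{(a_x,p_y):(x,y)\in M\}\cup\{(ad_i,pd_i):1\le i\le n-3\}$ is a bijection from the set of perfect matchings of $H$ onto the set of rank-maximal matchings of $G$.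
   Context: An instance of the rank-maximal matchings problem is a bipartite graph between applicants and posts in which each edge $(a,p)$ carries a rank $i$, meaning $p$ is an $i$-th choice of $a$. The signature of a matching is $(x_1,\dots,x_r)$, $x_i$ the number of applicants matched along rank-$i$ edges ($r$ the maximum rank); a matching is rank-maximal if its signature is lexicographically maximum among all matchings of the instance. *)

From mathcomp Require Import all_boot.
Set Implicit Arguments. Unset Strict Implicit. Unset Printing Implicit Defensive.

(* ---------- Generic rank-maximal matchings instances ----------
   An instance is given by finite types of applicants A and posts P and a
   rank function  rk : A -> P -> nat , where  rk a p = i > 0  means that
   (a,p) is an edge of rank i (p is an i-th choice of a), and  rk a p = 0
   means that (a,p) is not an edge. *)
Section RMM.
Variables (A P : finType) (rk : A -> P -> nat).

Definition is_edge (a : A) (p : P) : bool := 0 < rk a p.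

Definition is_matching (M : {set A * P}) : Prop :=
  [/\ forall e, e \in M -> is_edge e.1 e.2,
      forall a, #|[set e in M | e.1 == a]| <= 1
    & forall p, #|[set e in M | e.2 == p]| <= 1].

Definition max_rank : nat := \max_(e : A * P) rk e.1 e.2.

Definition signature (M : {set A * P}) : seq nat :=
  [seq #|[set e in M | rk e.1 e.2 == i]| | i <- iota 1 max_rank].

End RMM.

Fixpoint lex_le (s t : seq nat) : bool :=
  match s, t with
  | [::], _ => true
  | _ :: _, [::] => false
  | x :: s', y :: t' => (x < y) || ((x == y) && lex_le s' t')
  end.

Definition rank_maximal (A P : finType) (rk : A -> P -> nat)
    (M : {set A * P}) : Prop :=
  is_matching rk M /\
  forall M' : {set A * P}, is_matching rk M' ->
    lex_le (signature rk M') (signature rk M).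

Definition perfect_matching (X Y : finType) (E : X -> Y -> bool)
    (M : {set X * Y}) : Prop :=
  [/\ forall e, e \in M -> E e.1 e.2,
      forall x, #|[set e in M | e.1 == x]| = 1
    & forall y, #|[set e in M | e.2 == y]| = 1].

(* ---------- The instance G of the reduction ----------
   Applicants: inl x = a_x (x in X), inr i = ad_(i+1) (i : 'I_(n-3)).
   Posts:      inl y = p_y (y in Y), inr i = pd_(i+1).
   ord_ : Y -> 'I_n, so that the rank of p_y is (ord_ y).+1 in {1..n}.
   dr x i = the rank at which a_x lists the dummy post pd_(i+1). *)
Definition G_rank (X Y : finType) (n : nat) (E : X -> Y -> bool)
    (ord_ : Y -> 'I_n) (dr : X -> 'I_(n - 3) -> nat)
    (a : X + 'I_(n - 3)) (p : Y + 'I_(n - 3)) : nat :=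
  match a, p with
  | inl x, inl y => if E x y then (ord_ y).+1 else 0
  | inl x, inr j => dr x j
  | inr i, inl _ => 0
  | inr i, inr j => if i == j then 1 else 0
  end.

Definition lift_matching (X Y : finType) (n : nat) (M : {set X * Y})
    : {set (X + 'I_(n - 3)) * (Y + 'I_(n - 3))} :=
  [set ((inl e.1 : X + 'I_(n - 3)), (inl e.2 : Y + 'I_(n - 3))) | e in M]
  :|: [set ((inr i : X + 'I_(n - 3)), (inr i : Y + 'I_(n - 3))) | i : 'I_(n - 3)].

From mathcomp Require Import all_boot zify.
Set Implicit Arguments. Unset Strict Implicit. Unset Printing Implicit Defensive.

(* Only the n - 3 dummy posts and the post p_y with order(y) = 1 can be taken
   at rank 1, so a matching of G has at most n - 2 edges of rank 1; once all of
   them are taken, each rank r >= 2 can only be realised at the single post p_y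
   with order(y) = r. Hence (n - 2, 1, ..., 1) bounds every signature
   lexicographically, and lifts of perfect matchings of H attain it. By Hall's
   theorem the 3-regular graph H has a perfect matching, so rank-maximal
   matchings have exactly this signature, hence 2n - 3 edges: they match every
   applicant, each ad_i necessarily to pd_i, so every a_x gets a real post and
   the matching is the lift of a perfect matching of H. *)

(** * Hall's marriage theorem *)

Section Hall.
Variables (X Y : finType) (E : X -> Y -> bool) (y0 : Y).
Implicit Types (A S T : {set X}) (B C : {set Y}).

Definition nbr (B : {set Y}) (S : {set X}) : {set Y} :=
  [set y in B | [exists x in S, E x y]].

Definition hall_condition (A : {set X}) (B : {set Y}) : Prop :=
  forall S, S \subset A -> #|S| <= #|nbr B S|.

Definition matchable (A : {set X}) (B : {set Y}) : Prop :=
  exists f : X -> Y,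
    {in A, forall x, f x \in B /\ E x (f x)} /\ {in A &, injective f}.

Lemma nbrU B S1 S2 : nbr B (S1 :|: S2) = nbr B S1 :|: nbr B S2.
Proof.
apply/setP => y; rewrite !inE -andb_orr; congr (_ && _).
apply/existsP/orP => [[x /andP[]]|].
  by rewrite inE => /orP[] xS Exy; [left | right]; apply/existsP; exists x; rewrite xS.
by case=> /existsP[x /andP[xS Exy]]; exists x; rewrite inE xS ?orbT.
Qed.

Lemma nbrD B C S : nbr (B :\: C) S = nbr B S :\: C.
Proof. by apply/setP => y; rewrite !inE andbA. Qed.

Lemma nbr_sub B S : nbr B S \subset B.
Proof. by apply/subsetP => y; rewrite inE => /andP[]. Qed.

Lemma nbr_nbr B S T : T \subset S -> nbr (nbr B S) T = nbr B T.
Proof.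
move=> TS; apply/setP => y; rewrite !inE -andbA; case: (y \in B) => //=.
apply/andP/idP => [[]//|nbrT]; split=> //.
by case/existsP: nbrT => x /andP[xT Exy]; apply/existsP; exists x; rewrite (subsetP TS).
Qed.

Lemma matchable0 B : matchable set0 B.
Proof. by exists (fun=> y0); split=> [x|x]; rewrite inE. Qed.

Lemma matchable1 x y : E x y -> matchable [set x] [set y].
Proof.
move=> Exy; exists (fun=> y); split=> [x' /set1P-> | x1 x2 /set1P-> /set1P->//].
by rewrite set11.
Qed.

Lemma matchableU (A1 A2 : {set X}) (B1 B2 : {set Y}) : [disjoint B1 & B2] ->
  matchable A1 B1 -> matchable A2 B2 -> matchable (A1 :|: A2) (B1 :|: B2).
Proof.
move=> dB [f1 [f1B f1inj]] [f2 [f2B f2inj]].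
pose f x := if x \in A1 then f1 x else f2 x.
have fB x : x \in A1 :|: A2 -> f x \in (if x \in A1 then B1 else B2) /\ E x (f x).
  rewrite /f inE; case: ifP => [/f1B//|_ /= /f2B//].
exists f; split=> [x /fB[] | x1 x2 x1A x2A].
  by case: ifP; rewrite inE => _ -> ->; rewrite ?orbT.
have [fx1B _] := fB _ x1A; have [fx2B _] := fB _ x2A.
move: x1A x2A fx1B fx2B; rewrite /f !inE.
case: ifP => x1A1; case: ifP => x2A1 //= x1A2 x2A2.
- by move=> _ _; apply: f1inj.
- by move=> fx1B fx2B e; move: fx2B; rewrite -e (disjointFr dB fx1B).
- by move=> fx1B fx2B e; move: fx1B; rewrite e (disjointFr dB fx2B).
- by move=> _ _; apply: f2inj.
Qed.

Lemma hall_condition_nbr A B S :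
  hall_condition A B -> S \subset A -> hall_condition S (nbr B S).
Proof.
by move=> hallAB SA T TS; rewrite nbr_nbr //; apply: hallAB (subset_trans TS SA).
Qed.

Lemma hall_condition_tight A B S : hall_condition A B -> S \subset A ->
  #|nbr B S| <= #|S| -> hall_condition (A :\: S) (B :\: nbr B S).
Proof.
move=> hallAB SA tight T TAS.
have TA : T \subset A := subset_trans TAS (subsetDl A S).
have TS0 : T :&: S = set0.
  apply/setP => x; rewrite !inE; apply/andP => -[xT xS].
  by move: (subsetP TAS x xT); rewrite inE xS.
have := hallAB (T :|: S); rewrite subUset TA SA => /(_ isT).
rewrite cardsU TS0 cards0 subn0 nbrU nbrD cardsU cardsD.
have := subset_leq_card (subsetIl (nbr B T) (nbr B S)); lia.
Qed.

Lemma hall_condition_D1 A B x y : x \in A ->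
  (forall S, S \proper A -> S != set0 -> #|S| < #|nbr B S|) ->
  hall_condition (A :\ x) (B :\ y).
Proof.
move=> xA loose T TAx; have [->|T0] := eqVneq T set0; first by rewrite cards0.
have TA : T \subset A := subset_trans TAx (subsetDl A [set x]).
have TpA : T \proper A.
  apply/properP; split=> //; exists x => //.
  by apply/negP => /(subsetP TAx); rewrite !inE eqxx.
have := loose T TpA T0; rewrite nbrD (cardsD1 y (nbr B T)); case: (y \in _) => /=; lia.
Qed.

Theorem hall_marriage A B : hall_condition A B -> matchable A B.
Proof.
(* Induction on #|A|: split A along a tight proper subset S if there is one;
   otherwise every proper subset has surplus neighbours, so any edge x -- y
   can be used and the rest of A matched into B minus y. *)
have [k] := ubnP #|A|; elim: k => // k IH in A B *; rewrite ltnS => leAk.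
move=> hallAB; have [->|[x xA]] := set_0Vmem A; first exact: matchable0.
have [/existsP[S /and3P[SpA S0 tight]] | /existsPn loose] :=
  boolP [exists S : {set X}, [&& S \proper A, S != set0 & #|nbr B S| <= #|S|]].
  have SA := proper_sub SpA.
  have SltA := proper_card SpA.
  have ASltA : #|A :\: S| < #|A| by rewrite cardsDS // -card_gt0 in S0 *; lia.
  rewrite -(setID A S) (setIidPr SA) -(setID B (nbr B S)) (setIidPr (nbr_sub _ _)).
  apply: matchableU.
  - by rewrite disjoints_subset; apply/subsetP => y; rewrite !inE => ->.
  - exact: IH (leq_trans SltA leAk) (hall_condition_nbr hallAB SA).
  - exact: IH (leq_trans ASltA leAk) (hall_condition_tight hallAB SA tight).
have := hallAB [set x]; rewrite sub1set xA cards1 => /(_ isT).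
case/card_gt0P => y; rewrite inE => /andP[yB /existsP[x' /andP[/set1P-> Exy]]].
rewrite -(setD1K xA) -(setD1K yB); apply: matchableU.
- by rewrite disjoints1 !inE eqxx.
- exact: matchable1.
apply: IH; first by rewrite (cardsD1 x A) xA in leAk.
apply: hall_condition_D1 => // S SpA S0.
by have := loose S; rewrite SpA S0 /= -ltnNge.
Qed.

End Hall.

Section Fibres.
Variables (T U : finType) (f : T -> U) (M : {set T}).

Lemma fibres_le1_inj :
  (forall u, #|[set e in M | f e == u]| <= 1) -> {in M &, injective f}.
Proof.
move=> le1 e e' eM e'M fee.
by apply: (card_le1_eqP (le1 (f e))); rewrite inE ?eM ?e'M fee eqxx.
Qed.

Lemma inj_fibres_le1 :
  {in M &, injective f} -> forall u, #|[set e in M | f e == u]| <= 1.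
Proof.
move=> finj u; apply/card_le1_eqP => e e'.
rewrite !inE => /andP[eM /eqP<-] /andP[e'M /eqP fe'e].
exact: finj e'M eM fe'e.
Qed.

Lemma inj_onto_fibres1 : {in M &, injective f} -> f @: M = setT ->
  forall u, #|[set e in M | f e == u]| = 1.
Proof.
move=> finj onto u; apply/eqP; rewrite eqn_leq inj_fibres_le1 //=.
have /imsetP[e eM ->] : u \in f @: M by rewrite onto inE.
by apply/card_gt0P; exists e; rewrite inE eM eqxx.
Qed.

End Fibres.

Section PerfectMatching.
Variables (X Y : finType) (E : X -> Y -> bool).
Implicit Types (PM : {set X * Y}) (x : X) (y : Y).

Lemma perfect_matching_fst_inj PM : perfect_matching E PM -> {in PM &, injective fst}.
Proof. by case=> _ fst1 _; apply: fibres_le1_inj => x; rewrite fst1. Qed.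

Lemma perfect_matching_snd_inj PM : perfect_matching E PM -> {in PM &, injective snd}.
Proof. by case=> _ _ snd1; apply: fibres_le1_inj => y; rewrite snd1. Qed.

Lemma perfect_matching_partner PM y : perfect_matching E PM -> exists x, (x, y) \in PM.
Proof.
case=> _ _ /(_ y) snd1.
have /card_gt0P[[x y'] /setIdP[xyPM /eqP/= y'y]] : 0 < #|[set e in PM | e.2 == y]|.
  by rewrite snd1.
by exists x; rewrite -y'y.
Qed.

Lemma perfect_matching_of_inj PM : #|X| = #|Y| ->
    (forall e, e \in PM -> E e.1 e.2) ->
    {in PM &, injective fst} -> {in PM &, injective snd} ->
    (forall x, exists y, (x, y) \in PM) ->
  perfect_matching E PM.
Proof.
move=> cardXY edges fst_inj snd_inj total.
have fst_onto : fst @: PM = setT.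
  by apply/setP => x; rewrite inE; have [y xyPM] := total x; apply/imsetP; exists (x, y).
have snd_onto : snd @: PM = setT.
  apply/eqP; rewrite eqEcard subsetT cardsT (card_in_imset snd_inj) -cardXY.
  by rewrite -(card_in_imset fst_inj) fst_onto cardsT leqnn.
split=> //; exact: inj_onto_fibres1.
Qed.

Lemma regular_hall_condition d : 0 < d ->
    (forall x, #|[set y | E x y]| = d) -> (forall y, #|[set x | E x y]| = d) ->
  hall_condition E setT setT.
Proof.
move=> d_gt0 regX regY S _; rewrite -(leq_pmul2r d_gt0).
set N := nbr E setT S.
have -> : #|S| * d = \sum_(x in S) \sum_(y | E x y) 1.
  by rewrite -sum_nat_const; apply: eq_bigr => x _; rewrite sum1dep_card regX.
have -> : #|N| * d = \sum_(y in N) \sum_(x | E x y) 1.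
  by rewrite -sum_nat_const; apply: eq_bigr => y _; rewrite sum1dep_card regY.
rewrite (exchange_big_dep (mem N)) /=; last first.
  by move=> x y xS Exy; rewrite !inE; apply/existsP; exists x; rewrite xS.
apply: leq_sum => y _; rewrite !sum1dep_card; apply/subset_leq_card/subsetP => x.
by rewrite !inE => /andP[].
Qed.

Lemma regular_perfect_matching d : 0 < d -> #|X| = #|Y| ->
    (forall x, #|[set y | E x y]| = d) -> (forall y, #|[set x | E x y]| = d) ->
  exists PM, perfect_matching E PM.
Proof.
move=> d_gt0 cardXY regX regY.
have [Y0|/card_gt0P[y0 _]] := posnP #|Y|.
  exists set0; split=> [e|x|y]; rewrite ?inE //.
    by move: (card0_eq (etrans cardXY Y0) x); rewrite inE.
  by move: (card0_eq Y0 y); rewrite inE.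
have [f [fE finj]] := hall_marriage y0 (regular_hall_condition d_gt0 regX regY).
exists [set (x, f x) | x in setT]; apply: perfect_matching_of_inj => //.
- by move=> _ /imsetP[x _ ->]; have [] := fE x (in_setT x).
- by move=> _ _ /imsetP[x _ ->] /imsetP[x' _ ->] /= ->.
- move=> _ _ /imsetP[x _ ->] /imsetP[x' _ ->] /= fxx'.
  by rewrite (finj x x') ?in_setT.
- by move=> x; exists (f x); apply/imsetP; exists x.
Qed.

End PerfectMatching.

Lemma lex_le_refl s : lex_le s s.
Proof. by elim: s => //= x s ->; rewrite eqxx orbT. Qed.

Lemma lex_le_antisym s t : lex_le s t -> lex_le t s -> s = t.
Proof.
elim: s t => [|x s IH] [|y t] //=.
case/orP=> [xy|/andP[/eqP<- st]]; last by rewrite ltnn eqxx /= => /IH->.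
by rewrite ltnNge (ltnW xy) /= eq_sym (ltn_eqF xy).
Qed.

Lemma lex_le_all2 s t : all2 leq s t -> lex_le s t.
Proof.
elim: s t => [|x s IH] [|y t] //= /andP[]; rewrite leq_eqVlt.
by case/orP=> [/eqP-> /IH->|->]; rewrite ?eqxx ?orbT.
Qed.

Section Signature.
Variables (A P : finType) (rk : A -> P -> nat).

Lemma matching_fst_inj M : is_matching rk M -> {in M &, injective fst}.
Proof. by case=> _ fst1 _; apply: fibres_le1_inj. Qed.

Lemma matching_snd_inj M : is_matching rk M -> {in M &, injective snd}.
Proof. by case=> _ _ snd1; apply: fibres_le1_inj. Qed.

Lemma matching_set0 : is_matching rk set0.
Proof.
by split=> [e|a|p]; rewrite ?inE // (_ : [set e in set0 | _] = set0) ?cards0 //;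
  apply/setP => e; rewrite !inE.
Qed.

Lemma sumn_signature_le M : sumn (signature rk M) <= #|M|.
Proof.
rewrite sumnE big_map -sum1_card.
under eq_bigr do rewrite -sum1dep_card.
rewrite (exchange_big_dep (mem M)) /=; last by move=> i e _ /andP[].
apply: leq_sum => e eM; rewrite sum1_count.
under eq_count do rewrite eM eq_sym.
by rewrite (count_uniq_mem _ (iota_uniq _ _)) leq_b1.
Qed.
End Signature.

Lemma eq_map_iota_nseq (f : nat -> nat) c m k :
  (forall i, m <= i < m + k -> f i = c) -> map f (iota m k) = nseq k c.
Proof.
elim: k m => //= k IH m fc; rewrite fc ?leqnn ?addnS ?ltnS ?leq_addr // IH //.
move=> i /andP[mi ik].
by apply: fc; rewrite ltnW //= -addSnnS.
Qed.

Lemma all2_map_iota_nseq (r : rel nat) (f : nat -> nat) c m k :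
  (forall i, m <= i < m + k -> r (f i) c) -> all2 r (map f (iota m k)) (nseq k c).
Proof.
elim: k m => //= k IH m rfc; rewrite rfc ?leqnn ?addnS ?ltnS ?leq_addr // IH //.
move=> i /andP[mi ik].
by apply: rfc; rewrite ltnW //= -addSnnS.
Qed.

(** * The reduction *)

Section Lift.
Variables (X Y : finType) (n : nat).

Lemma mem_lift_matching (PM : {set X * Y}) (e : (X + 'I_(n - 3)) * (Y + 'I_(n - 3))) :
  (e \in lift_matching n PM) =
  match e with
  | (inl x, inl y) => (x, y) \in PM
  | (inr i, inr j) => i == j
  | _ => false
  end.
Proof.
rewrite !inE; case: e => [[x|i] [y|j]].
- apply/orP/idP => [[/imsetP[[x' y'] xyPM [-> ->]] // | /imsetP[]//] | xyPM].
  by left; apply/imsetP; exists (x, y).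
- by apply/orP => -[/imsetP[]|/imsetP[]].
- by apply/orP => -[/imsetP[]|/imsetP[]].
- apply/orP/eqP => [[/imsetP[]//|/imsetP[k _ [-> ->]]//] | ->].
  by right; apply/imsetP; exists j.
Qed.

Lemma lift_matching_inj : injective (@lift_matching X Y n).
Proof.
move=> PM1 PM2 eqL; apply/setP => -[x y].
have := congr1 (fun L : {set (X + 'I_(n - 3)) * (Y + 'I_(n - 3))} =>
  (inl x, inl y) \in L) eqL.
by rewrite /= !mem_lift_matching.
Qed.

End Lift.

Section Reduction.
Variables (X Y : finType) (n : nat) (E : X -> Y -> bool)
  (ord_ : Y -> 'I_n) (dr : X -> 'I_(n - 3) -> nat).
Hypotheses (hX : #|X| = n) (hY : #|Y| = n)
  (hregX : forall x, #|[set y | E x y]| = 3)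
  (hregY : forall y, #|[set x | E x y]| = 3)
  (hord : bijective ord_)
  (hdr_range : forall x i, 1 <= dr x i <= n)
  (hn : 3 <= n).

Local Notation rk := (G_rank E ord_ dr).
Local Notation AP := ((X + 'I_(n - 3)) * (Y + 'I_(n - 3)))%type.
Implicit Types (M : {set AP}) (PM : {set X * Y}).

Definition rank_count M r := #|[set e in M | rk e.1 e.2 == r]|.

Definition optimal_signature := n - 2 :: nseq (n - 1) 1.

Lemma ord_surj (i : 'I_n) : exists y, ord_ y = i.
Proof. by case: hord => g _ ordK; exists (g i). Qed.

Lemma G_rank_le a p : rk a p <= n.
Proof.
case: a p => [x|i] [y|j] //=.
- by case: (E x y).
- by case/andP: (hdr_range x j).
- by case: (i == j); lia.
Qed.

Lemma max_rank_G : max_rank rk = n.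
Proof.
apply/eqP; rewrite eqn_leq; apply/andP; split.
  by apply/bigmax_leqP => e _; apply: G_rank_le.
have ltn_pred : n.-1 < n by lia.
have [y ordy] := ord_surj (Ordinal ltn_pred).
have /card_gt0P[x] : 0 < #|[set x | E x y]| by rewrite hregY.
rewrite inE => Exy; apply: leq_trans (leq_bigmax ((inl x, inl y) : AP)).
by rewrite /= Exy ordy /=; lia.
Qed.

Lemma signature_G M :
  signature rk M = rank_count M 1 :: map (rank_count M) (iota 2 (n - 1)).
Proof.
have n_ge1 : 1 <= n by lia.
by rewrite /signature max_rank_G -[in iota 1 n](subnK n_ge1) addn1.
Qed.

Definition rank1_posts : {set Y + 'I_(n - 3)} :=
  [set p | if p is inl y then ord_ y == 0 :> nat else true].

Lemma rank1_posts_rank1 a p : rk a p = 1 -> p \in rank1_posts.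
Proof. by rewrite inE; case: a p => [x|i] [y|j] //=; case: (E x y) => // -[->]. Qed.

Lemma card_rank1_posts : #|rank1_posts| <= n - 2.
Proof.
have n_gt0 : 0 < n by lia.
have [y0 ordy0] := ord_surj (Ordinal n_gt0).
have sub : rank1_posts \subset inl y0 |: [set inr j | j : 'I_(n - 3)].
  apply/subsetP => -[y|j]; rewrite !inE.
    move=> /eqP ordy; apply/orP; left; apply/eqP; congr inl.
    by apply: (bij_inj hord); apply: val_inj; rewrite /= ordy0 ordy.
  by move=> _; apply/orP; right; apply/imsetP; exists j.
apply: leq_trans (subset_leq_card sub) _.
rewrite cardsU1 card_imset ?card_ord; last by move=> i j [].
by case: (_ \notin _) => /=; lia.
Qed.

Lemma rank1_matched_posts M : is_matching rk M ->
  #|snd @: [set e in M | rk e.1 e.2 == 1]| = rank_count M 1 /\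
  snd @: [set e in M | rk e.1 e.2 == 1] \subset rank1_posts.
Proof.
move=> matM; split.
  apply: card_in_imset => e e' /setIdP[eM _] /setIdP[e'M _].
  exact: (matching_snd_inj matM).
by apply/subsetP => _ /imsetP[e /setIdP[_ /eqP/rank1_posts_rank1 ?] ->].
Qed.

Lemma rank_count1_le M : is_matching rk M -> rank_count M 1 <= n - 2.
Proof.
move=> /rank1_matched_posts[<- sub_posts].
exact: leq_trans (subset_leq_card sub_posts) card_rank1_posts.
Qed.

Lemma rank1_posts_matched M p : is_matching rk M -> rank_count M 1 = n - 2 ->
  p \in rank1_posts -> exists2 a, (a, p) \in M & rk a p = 1.
Proof.
move=> /rank1_matched_posts[card_matched sub_posts] full.
have : snd @: [set e in M | rk e.1 e.2 == 1] == rank1_posts.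
  by rewrite eqEcard sub_posts card_matched full card_rank1_posts.
by move/eqP <- => /imsetP[[a p'] /setIdP[eM /eqP rk1] ->]; exists a.
Qed.

Lemma post_of_rank_ge2 M e : is_matching rk M -> rank_count M 1 = n - 2 ->
  e \in M -> 2 <= rk e.1 e.2 -> exists2 y, e.2 = inl y & (ord_ y).+1 = rk e.1 e.2.
Proof.
move=> matM full; case: e => [[x|i] [y|j]] eM //= rk_ge2.
- by case: (E x y) rk_ge2 => // _; exists y.
- have [a aj rk1] : exists2 a, (a, inr j) \in M & rk a (inr j) = 1.
    by apply: rank1_posts_matched; rewrite ?inE.
  have [xa] := matching_snd_inj matM eM aj erefl.
  by move: rk1 rk_ge2; rewrite -xa /= => ->.
- by case: (i == j) rk_ge2.
Qed.

Lemma rank_count_le1 M r : is_matching rk M -> rank_count M 1 = n - 2 ->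
  2 <= r -> rank_count M r <= 1.
Proof.
move=> matM full r_ge2; apply/card_le1_eqP => e e'.
move=> /setIdP[eM /eqP rke] /setIdP[e'M /eqP rke'].
have [|y ey ordy] := post_of_rank_ge2 matM full eM; first by rewrite rke.
have [|y' e'y' ordy'] := post_of_rank_ge2 matM full e'M; first by rewrite rke'.
apply: (matching_snd_inj matM e'M eM); rewrite ey e'y'; congr inl.
by apply: (bij_inj hord); apply: val_inj; apply: succn_inj; rewrite ordy ordy' rke rke'.
Qed.

Lemma signature_le_optimal M : is_matching rk M ->
  lex_le (signature rk M) optimal_signature.
Proof.
move=> matM; rewrite signature_G /=.
have := rank_count1_le matM; rewrite leq_eqVlt => /orP[/eqP full | ->] //.
rewrite full ltnn eqxx /=; apply/lex_le_all2/all2_map_iota_nseq => r /andP[r_ge2 _].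
exact: rank_count_le1.
Qed.

Lemma lift_is_matching PM : perfect_matching E PM -> is_matching rk (lift_matching n PM).
Proof.
move=> pmPM; have [edgesPM _ _] := pmPM.
split.
- case=> [[x|i] [y|j]]; rewrite mem_lift_matching // /is_edge /=.
    by move/edgesPM => /= ->.
  by move/eqP->; rewrite eqxx.
- apply: inj_fibres_le1 => -[[x1|i1] [y1|j1]] [[x2|i2] [y2|j2]];
    rewrite !mem_lift_matching //= => e1 e2 [eq1].
    by rewrite eq1 in e1 *; have [->] := perfect_matching_fst_inj pmPM e1 e2 erefl.
  by rewrite -(eqP e1) -(eqP e2) eq1.
- apply: inj_fibres_le1 => -[[x1|i1] [y1|j1]] [[x2|i2] [y2|j2]];
    rewrite !mem_lift_matching //= => e1 e2 [eq2].
    by rewrite eq2 in e1 *; have [->] := perfect_matching_snd_inj pmPM e1 e2 erefl.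
  by rewrite (eqP e1) (eqP e2) eq2.
Qed.

Lemma lift_has_rank PM r : perfect_matching E PM -> 0 < r <= n ->
  exists x y, (x, y) \in PM /\ rk (inl x) (inl y) = r.
Proof.
move=> pmPM /andP[r_gt0 r_le]; have ltr : r.-1 < n by lia.
have [y ordy] := ord_surj (Ordinal ltr).
have [x xyPM] := perfect_matching_partner y pmPM.
exists x, y; split=> //; have [edgesPM _ _] := pmPM.
by rewrite /= (edgesPM _ xyPM) ordy /= prednK.
Qed.

Lemma rank_count_lift1 PM : perfect_matching E PM ->
  rank_count (lift_matching n PM) 1 = n - 2.
Proof.
move=> pmPM; apply/eqP; rewrite eqn_leq (rank_count1_le (lift_is_matching pmPM)) /=.
have [|x [y [xyPM rk1]]] := lift_has_rank (r := 1) pmPM; first lia.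
set S := (inl x, inl y) |: [set (inr j, inr j) | j : 'I_(n - 3)].
have sub : S \subset [set e in lift_matching n PM | rk e.1 e.2 == 1].
  apply/subsetP => e /setU1P[-> | /imsetP[j _ ->]]; rewrite inE mem_lift_matching.
    by rewrite xyPM rk1.
  by rewrite /= !eqxx.
apply: leq_trans (subset_leq_card sub); rewrite cardsU1 card_imset ?card_ord.
  suff -> : ((inl x, inl y) : AP) \in [set (inr j, inr j) | j : 'I_(n - 3)] = false by lia.
  by apply/imsetP => -[].
by move=> i j [].
Qed.

Lemma rank_count_lift PM r : perfect_matching E PM -> 2 <= r <= n ->
  rank_count (lift_matching n PM) r = 1.
Proof.
move=> pmPM /andP[r_ge2 r_le]; apply/eqP; rewrite eqn_leq.
rewrite (rank_count_le1 (lift_is_matching pmPM) (rank_count_lift1 pmPM) r_ge2) /=.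
have [|x [y [xyPM rkr]]] := lift_has_rank (r := r) pmPM; first lia.
by apply/card_gt0P; exists (inl x, inl y); rewrite inE mem_lift_matching xyPM rkr eqxx.
Qed.

Lemma signature_lift PM : perfect_matching E PM ->
  signature rk (lift_matching n PM) = optimal_signature.
Proof.
move=> pmPM; rewrite signature_G rank_count_lift1 //; congr (_ :: _).
by apply: eq_map_iota_nseq => r r_range; apply: rank_count_lift => //; lia.
Qed.

Lemma lift_rank_maximal PM : perfect_matching E PM ->
  rank_maximal rk (lift_matching n PM).
Proof.
move=> pmPM; split=> [|M matM]; first exact: lift_is_matching.
by rewrite signature_lift //; apply: signature_le_optimal.
Qed.

Lemma rank_maximal_signature M : rank_maximal rk M ->
  signature rk M = optimal_signature.
Proof.
have [PM pmPM] := regular_perfect_matching (isT : 0 < 3) (etrans hX (esym hY)) hregX hregY.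
case=> matM maxM; apply: lex_le_antisym (signature_le_optimal matM) _.
by rewrite -(signature_lift pmPM); apply: maxM (lift_is_matching pmPM).
Qed.

Lemma rank_maximal_covers_applicants M : rank_maximal rk M -> fst @: M = setT.
Proof.
move=> rmM; have [matM _] := rmM.
have := sumn_signature_le rk M; rewrite rank_maximal_signature //= sumn_nseq.
rewrite -(card_in_imset (matching_fst_inj matM)) => card_fst.
apply/eqP; rewrite eqEcard subsetT cardsT card_sum card_ord hX.
by apply: leq_trans card_fst; lia.
Qed.

Lemma covering_matching_is_lift M : is_matching rk M -> fst @: M = setT ->
  exists2 PM, perfect_matching E PM & lift_matching n PM = M.
Proof.
move=> matM cover; have [edgesM _ _] := matM.
have partner a : exists p, (a, p) \in M.
  have /imsetP[[a' p] apM /= ->] : a \in fst @: M by rewrite cover inE.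
  by exists p.
have dummy j : ((inr j, inr j) : AP) \in M.
  have [[y|j'] jpM] := partner (inr j); have := edgesM _ jpM; rewrite /is_edge //=.
  by case: ifP => // /eqP jj' _; rewrite {2}jj'.
have no_real_dummy x j : ((inl x, inr j) : AP) \notin M.
  by apply/negP => xjM; have [] := matching_snd_inj matM xjM (dummy j) erefl.
exists [set e : X * Y | ((inl e.1, inl e.2) : AP) \in M].
  apply: perfect_matching_of_inj; first by rewrite hX hY.
  - move=> [x y]; rewrite inE => /edgesM; rewrite /is_edge /=.
    by case: (E x y).
  - move=> [x y] [x' y']; rewrite !inE /= => xyM x'y'M xx'; rewrite xx' in xyM *.
    by have [->] := matching_fst_inj matM xyM x'y'M erefl.
  - move=> [x y] [x' y']; rewrite !inE /= => xyM x'y'M yy'; rewrite yy' in xyM *.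
    by have [->] := matching_snd_inj matM xyM x'y'M erefl.
  - move=> x; have [[y|j] xpM] := partner (inl x); first by exists y; rewrite inE.
    by rewrite (negbTE (no_real_dummy x j)) in xpM.
apply/setP => -[[x|i] [y|j]]; rewrite mem_lift_matching ?inE //=.
- by rewrite (negbTE (no_real_dummy x j)).
- by apply/esym/negP => /edgesM.
- apply/eqP/idP => [<-|/edgesM]; first exact: dummy.
  by rewrite /is_edge /=; case: eqP.
Qed.

Lemma rank_maximal_lift M : rank_maximal rk M ->
  exists2 PM, perfect_matching E PM & lift_matching n PM = M.
Proof.
move=> rmM; have [matM _] := rmM.
exact: covering_matching_is_lift matM (rank_maximal_covers_applicants rmM).
Qed.

End Reduction.

Lemma set_card0 (T : finType) (A : {set T}) : #|T| = 0 -> A = set0.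
Proof. by move=> T0; apply/setP => t; move: (card0_eq T0 t); rewrite !inE. Qed.

Theorem lemma5 (X Y : finType) (n : nat) (E : X -> Y -> bool)
    (ord_ : Y -> 'I_n) (dr : X -> 'I_(n - 3) -> nat)
    (hX : #|X| = n) (hY : #|Y| = n)
    (hregX : forall x : X, #|[set y | E x y]| = 3)
    (hregY : forall y : Y, #|[set x | E x y]| = 3)
    (hord : bijective ord_)
    (hdr_inj : forall x : X, injective (dr x))
    (hdr_range : forall (x : X) (i : 'I_(n - 3)), 1 <= dr x i <= n)
    (hdr_fresh : forall (x : X) (i : 'I_(n - 3)) (y : Y),
        E x y -> dr x i != (ord_ y).+1) :
  let rk := G_rank E ord_ dr in
  [/\ forall M : {set X * Y}, perfect_matching E M ->
        rank_maximal rk (lift_matching n M),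
      forall M1 M2 : {set X * Y}, perfect_matching E M1 ->
        perfect_matching E M2 ->
        lift_matching n M1 = lift_matching n M2 -> M1 = M2
    & forall M' : {set (X + 'I_(n - 3)) * (Y + 'I_(n - 3))},
        rank_maximal rk M' ->
        exists2 M : {set X * Y}, perfect_matching E M &
          lift_matching n M = M'].
Proof.
move=> rk; have [X0|/card_gt0P[x _]] := posnP #|X|.
  have n0 : n = 0 by rewrite -hX.
  have AP0 : #|{: (X + 'I_(n - 3)) * (Y + 'I_(n - 3))}| = 0.
    by rewrite card_prod !card_sum card_ord X0 hY n0.
  split=> [M _ | M1 M2 _ _ _ | M' _].
  - rewrite (set_card0 (lift_matching n M) AP0).
    split=> [|M' _]; first exact: matching_set0.
    by rewrite (set_card0 M' AP0) lex_le_refl.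
  - by rewrite (set_card0 M1) ?(set_card0 M2) // card_prod X0.
  - exists set0; last by rewrite (set_card0 M' AP0) (set_card0 (lift_matching n set0) AP0).
    split=> [e|x|y]; rewrite ?inE //.
      by move: (card0_eq X0 x); rewrite inE.
    by move: (card0_eq (etrans hY n0) y); rewrite inE.
have hn : 3 <= n by rewrite -hY -(hregX x) max_card.
split.
- exact: lift_rank_maximal.
- by move=> M1 M2 _ _; apply: lift_matching_inj.
- exact: rank_maximal_lift.
Qed.
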